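(* Consider two state assemblages $\vec{\sigma}^{(1)}=\{\sigma^{(1)}_{a|x}\}_{a,x}$ and $\vec{\sigma}^{(2)}=\{\sigma^{(2)}_{a|x}\}_{a,x}$ on Bob's Hilbert space $\mathcal{H}_{\rm B}$. Denote their reduced states as $\rho^{(i)}:=\sum_a \sigma_{a|x}^{(i)}$, their ranges as $\mathcal{K}_i := {\rm ran}(\rho^{(i)})$, and the dimensions as $d_i:={\rm dim}( \mathcal{K}_i)$, for $i=1,2$. Then the following statements are equivalent: (i) $\vec{\sigma}^{(1)} \sim_{\rm SEO} \vec{\sigma}^{(2)}$, i.e., there is a unitary $U$ on $\mathcal{H}_{\rm B}$ such that $B_{a|x}^{(1)} \oplus 0_{\mathcal{K}_{1}^\perp} = U ( B^{(2)}_{a|x} \oplus 0_{\mathcal{K}_{2}^\perp} ) U^\dagger$ for all $a,x$, where $B^{(i)}$ is the steering-equivalent-observable measurement assemblage (SEO) of $\vec{\sigma}^{(i)}$; (ii) $\vec{\sigma}^{(1)} \sim_{{\rm LF_1}} \vec{\sigma}^{(2)}$, i.e., each assemblage can be transformed into the other by a single-Kraus-operator local filter on Bob's side; (iii) $\vec{\sigma}^{(2)}$ can be transformed into $\vec{\sigma}^{(1)}$ by a single-Kraus-operator local filter on Bob's side, and $d_1=d_2$. Moreover, in the case $\vec{\sigma}^{(1)} \sim_{\rm SEO} \vec{\sigma}^{(2)}$, the filter $K$ transforming $\vec{\sigma}^{(2)}$ into $\vec{\sigma}^{(1)}$ can be explicitly computed as a function of the reduced states $\rho^{(i)}$ and the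 unitary $U$ in (i). Such a filter can be constructed to have success probability \begin{equation} p_{\rm succ} = \left[\lambda_{\max}\left( {\rho^{(2)}}^{-1/2} U^\dagger \rho^{(1)} U{\rho^{(2)}}^{-1/2}\right)\right]^{-1}, \end{equation} where $\lambda_{\max}(X)$ denotes the maximum eigenvalue of the operator $X$ (and ${\rho^{(2)}}^{-1/2}$ denotes the inverse square root on the range of $\rho^{(2)}$, extended by $0$ on its orthogonal complement). This value is optimal if the initial assemblage $\{\sigma^{(2)}_{a|x}\}$ contains sufficiently many linearly independent operators (at least $d^2$, $d=\dim\mathcal{H}_{\rm B}$) to perform channel tomography.
   Context: Steering scenario: Alice and Bob share $\rho_{\rm AB}$; Alice measures POVMs $\{A_{a|x}\}_a$ and Bob's subnormalized conditional states are $\sigma_{a|x}={\rm tr}_{\rm A}[(A_{a|x}\otimes \mathbb{1})\rho_{\rm AB}]$; the collection $\vec{\sigma}=\{\sigma_{a|x}\}_{a,x}$ is a state assemblage, with reduced state $\rho_{\rm B}=\sum_a\sigma_{a|x}$ (independent of $x$). SEO: let $\mathcal{K}={\rm ran}(\rho_{\rm B})$, $\Pi_{\rm B}:\mathcal{H}_{\rm B}\to\mathcal{K}$ with $\Pi_{\rm B}\Pi_{\rm B}^*=\mathbb{1}_{\mathcal{K}}$, $\tilde\rho_{\rm B}=\Pi_{\rm B}\rho_{\rm B}\Pi_{\rm B}^*$, $\tilde\sigma_{a|x}=\Pi_{\rm B}\sigma_{a|x}\Pi_{\rm B}^*$; then $B_{a|x}:=\tilde\rho_{\rm B}^{-1/2}\tilde\sigma_{a|x}\tilde\rho_{\rm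 B}^{-1/2}$. A single-Kraus local filter (${\rm LF_1}$) on Bob's side maps $\sigma_{a|x}\mapsto K\sigma_{a|x}K^\dagger/p_{\rm succ}$ for all $a,x$, with $K^\dagger K\le\mathbb{1}$ and $p_{\rm succ}={\rm tr}[\sum_a\sigma_{a|x}K^\dagger K]>0$ ($\mathbb{1}$ the identity operator). $\vec{\sigma}^{(1)}\sim_{\rm LF_1}\vec{\sigma}^{(2)}$ means transformations exist in both directions. *)

From HB Require Import structures.
From mathcomp Require Import all_boot all_order all_algebra.
From mathcomp.real_closed Require Import mxtens.

Set Implicit Arguments.
Unset Strict Implicit.
Unset Printing Implicit Defensive.

Import Order.TTheory GRing.Theory Num.Theory.
Local Open Scope ring_scope.
Local Open Scope sesquilinear_scope.

Section Steering.
Variable C : numClosedFieldType.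

Definition adj m n (A : 'M[C]_(m, n)) : 'M[C]_(n, m) := A ^t*.

Definition psd n (A : 'M[C]_n) : Prop :=
  A = adj A /\ forall u : 'cV[C]_n, 0 <= (adj u *m A *m u) 0 0.

Definition loewner_le n (A B : 'M[C]_n) : Prop := psd (B - A).

Definition density n (rho : 'M[C]_n) : Prop := psd rho /\ \tr rho = 1.

Definition povm d nA (M : 'I_nA -> 'M[C]_d) : Prop :=
  (forall a, psd (M a)) /\ \sum_(a < nA) M a = 1%:M.

Definition ptrA dA n (M : 'M[C]_(dA * n)) : 'M[C]_n :=
  \matrix_(j, l) \sum_(i < dA) M (mxtens_index (i, j)) (mxtens_index (i, l)).

Definition assemblage n nA nX (sig : 'I_nA -> 'I_nX -> 'M[C]_n) : Prop :=
  exists (dA : nat) (rhoAB : 'M[C]_(dA * n)) (M : 'I_nX -> 'I_nA -> 'M[C]_dA),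
    [/\ density rhoAB, (forall x, povm (M x)) &
        forall a x, sig a x = ptrA ((M x a *t (1%:M : 'M[C]_n)) *m rhoAB)].

Definition red n nA nX (x0 : 'I_nX) (sig : 'I_nA -> 'I_nX -> 'M[C]_n) : 'M[C]_n :=
  \sum_(a < nA) sig a x0.

(* functional calculus for normal (in particular Hermitian) matrices,
   through the spectral decomposition A = P^-1 diag(sp) P, P unitary *)
Definition mxfun n (f : C -> C) (A : 'M[C]_n) : 'M[C]_n :=
  invmx (spectralmx A) *m diag_mx (map_mx f (spectral_diag A)) *m spectralmx A.

Definition sqrtmx n (A : 'M[C]_n) : 'M[C]_n := mxfun sqrtC A.

Definition isqrtmx n (A : 'M[C]_n) : 'M[C]_n :=
  mxfun (fun t => if t == 0 then 0 else (sqrtC t)^-1) A.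

(* steering-equivalent observables, embedded as B_{a|x} (+) 0 on H_B:
   rho^{-1/2} sigma_{a|x} rho^{-1/2} *)
Definition seo n nA nX (x0 : 'I_nX) (sig : 'I_nA -> 'I_nX -> 'M[C]_n)
  (a : 'I_nA) (x : 'I_nX) : 'M[C]_n :=
  isqrtmx (red x0 sig) *m sig a x *m isqrtmx (red x0 sig).

Definition seo_equiv n nA nX (x0 : 'I_nX) (s1 s2 : 'I_nA -> 'I_nX -> 'M[C]_n) : Prop :=
  exists U : 'M[C]_n, U \is unitarymx /\
    forall a x, seo x0 s1 a x = U *m seo x0 s2 a x *m adj U.

Definition psucc n nA nX (x0 : 'I_nX) (sig : 'I_nA -> 'I_nX -> 'M[C]_n)
  (K : 'M[C]_n) : C :=
  \tr (red x0 sig *m (adj K *m K)).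

Definition lf1_filter n nA nX (x0 : 'I_nX) (s t : 'I_nA -> 'I_nX -> 'M[C]_n)
  (K : 'M[C]_n) : Prop :=
  [/\ loewner_le (adj K *m K) 1%:M, 0 < psucc x0 s K &
      forall a x, t a x = (psucc x0 s K)^-1 *: (K *m s a x *m adj K)].

Definition lf1_trans n nA nX (x0 : 'I_nX) (s t : 'I_nA -> 'I_nX -> 'M[C]_n) : Prop :=
  exists K, lf1_filter x0 s t K.

Definition lf1_equiv n nA nX (x0 : 'I_nX) (s1 s2 : 'I_nA -> 'I_nX -> 'M[C]_n) : Prop :=
  lf1_trans x0 s1 s2 /\ lf1_trans x0 s2 s1.

Definition is_lambda_max n (X : 'M[C]_n) (l : C) : Prop :=
  eigenvalue X l /\ forall m, eigenvalue X m -> m <= l.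

Definition tomographic n nA nX (sig : 'I_nA -> 'I_nX -> 'M[C]_n) : Prop :=
  exists f : 'I_(n ^ 2) -> 'I_nA * 'I_nX,
    row_free (\matrix_(k < n ^ 2) mxvec (sig (f k).1 (f k).2)).

End Steering.

(* Write rho_i for the reduced states and P_i for the projections onto their
   ranges.  If U relates the SEOs, then L := rho1^(1/2) U rho2^(-1/2) satisfies
   L sigma2 L^dag = sigma1, so L scaled by lambda_max(L^dag L)^(-1/2) is a filter
   with success probability 1/lambda_max.  When sigma2 is tomographically
   complete, a filter K with success probability p satisfies
   K Y K^dag = p L Y L^dag for every Y; testing this on a top eigenvector of
   L^dag L against K^dag K <= 1 gives p <= 1/lambda_max.
   A filter cannot increase rank.  Conversely, for a filter K from sigma2 to
   sigma1, W := p^(-1/2) rho1^(-1/2) K rho2^(1/2) satisfies W W^dag = P1 and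
   W P2 = W; if rank rho1 = rank rho2 then also W^dag W = P2, so W is a partial
   isometry from ran rho2 onto ran rho1, and any unitary extension U of W
   satisfies U B2 U^dag = W B2 W^dag = B1. *)

From HB Require Import structures.
From mathcomp Require Import all_boot all_order all_algebra.
From mathcomp.real_closed Require mxtens.

Set Implicit Arguments.
Unset Strict Implicit.
Unset Printing Implicit Defensive.

Import Order.TTheory GRing.Theory Num.Theory Num.Def.
Local Open Scope ring_scope.

Section Adjoint.
Variable C : numClosedFieldType.

Lemma adjmxK m n (A : 'M[C]_(m, n)) : adj (adj A) = A.
Proof. by apply/matrixP=> i j; rewrite !mxE conjCK. Qed.

Lemma adjmxM m n p (A : 'M[C]_(m, n)) (B : 'M[C]_(n, p)) :
  adj (A *m B) = adj B *m adj A.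
Proof.
apply/matrixP=> i j; rewrite !mxE rmorph_sum; apply: eq_bigr => k _.
by rewrite !mxE rmorphM mulrC.
Qed.

Lemma adjmxD m n (A B : 'M[C]_(m, n)) : adj (A + B) = adj A + adj B.
Proof. by apply/matrixP=> i j; rewrite !mxE rmorphD. Qed.

Lemma adjmxB m n (A B : 'M[C]_(m, n)) : adj (A - B) = adj A - adj B.
Proof. by apply/matrixP=> i j; rewrite !mxE rmorphB. Qed.

Lemma adjmxZ m n c (A : 'M[C]_(m, n)) : adj (c *: A) = c^* *: adj A.
Proof. by apply/matrixP=> i j; rewrite !mxE rmorphM. Qed.

Lemma adjmx0 m n : adj (0 : 'M[C]_(m, n)) = 0.
Proof. by apply/matrixP=> i j; rewrite !mxE rmorph0. Qed.

Lemma adjmx_scalar n c : adj (c%:M : 'M[C]_n) = c^*%:M.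
Proof.
apply/matrixP=> i j; rewrite !mxE eq_sym.
by case: eqP => _; rewrite ?mulr1n ?mulr0n ?rmorph0.
Qed.

Lemma adjmx1 n : adj (1%:M : 'M[C]_n) = 1%:M.
Proof. by rewrite adjmx_scalar rmorph1. Qed.

Lemma adjmx_diag n (d : 'rV[C]_n) : adj (diag_mx d) = diag_mx (map_mx conjC d).
Proof.
apply/matrixP=> i j; rewrite !mxE eq_sym.
by case: eqP => [->|]; rewrite ?mulr1n ?mulr0n ?rmorph0.
Qed.

Lemma mulmx_adj_unitary m n (U : 'M[C]_(m, n)) :
  U \is unitarymx -> U *m adj U = 1%:M.
Proof. by move/unitarymxP. Qed.

Lemma adj_mulmx_unitary n (U : 'M[C]_n) : U \is unitarymx -> adj U *m U = 1%:M.
Proof. by move/unitarymxP/mulmx1C. Qed.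

Lemma mx_eq0_cV m n (M : 'M[C]_(m, n)) : (forall u : 'cV[C]_n, M *m u = 0) -> M = 0.
Proof.
move=> M0; apply/matrixP=> i j.
have /matrixP/(_ i 0) := M0 (col j 1%:M); rewrite !mxE => <-.
rewrite (bigD1 j) //= big1 ?addr0; first by rewrite !mxE eqxx mulr1.
by move=> k /negbTE kj; rewrite !mxE kj mulr0.
Qed.

Lemma adj_mulmx_eq0 m n (X : 'M[C]_(m, n)) : adj X *m X = 0 -> X = 0.
Proof.
move=> XX0; apply/matrixP=> i j.
have /matrixP/(_ j j) := XX0; rewrite !mxE => /eqP.
rewrite psumr_eq0 => [/allP/(_ i (mem_index_enum _))|k _].
  by rewrite !mxE mulrC mul_conjC_eq0 => /eqP.
by rewrite !mxE mulrC mul_conjC_ge0.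
Qed.

End Adjoint.

Section Psd.
Variables (C : numClosedFieldType) (n : nat).
Implicit Types A B X Y : 'M[C]_n.

Definition qform X (u : 'cV[C]_n) : C := (adj u *m X *m u) 0 0.

Lemma qformB A B u : qform (A - B) u = qform A u - qform B u.
Proof. by rewrite /qform mulmxBr mulmxBl !mxE. Qed.

Lemma psd_herm A : psd A -> A = adj A.
Proof. by case. Qed.

Lemma psd_qform A u : psd A -> 0 <= qform A u.
Proof. by case=> _; apply. Qed.

Lemma psd0 : psd (0 : 'M[C]_n).
Proof. by split; [rewrite adjmx0 | move=> u; rewrite mulmx0 mul0mx mxE]. Qed.

Lemma psdD A B : psd A -> psd B -> psd (A + B).
Proof.
move=> [hA qA] [hB qB]; split; first by rewrite adjmxD -hA -hB.
by move=> u; rewrite mulmxDr mulmxDl mxE addr_ge0.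
Qed.

Lemma psd_sum I (r : seq I) (P : pred I) (F : I -> 'M[C]_n) :
  (forall i, P i -> psd (F i)) -> psd (\sum_(i <- r | P i) F i).
Proof.
move=> Fpsd; elim/big_rec: _ => [|i X Pi hX]; first exact: psd0.
exact: psdD (Fpsd i Pi) hX.
Qed.

Lemma psd_adj_mulmx m (L : 'M[C]_(m, n)) : psd (adj L *m L).
Proof.
split=> [|u]; first by rewrite adjmxM adjmxK.
rewrite mulmxA -adjmxM -mulmxA mxE; apply: sumr_ge0 => i _.
by rewrite !mxE mulrC mul_conjC_ge0.
Qed.

Lemma psd_conj m (B : 'M[C]_(n, m)) A : psd A -> psd (adj B *m A *m B).
Proof.
move=> [hA qA]; split=> [|u]; first by rewrite !adjmxM adjmxK -hA mulmxA.
by have := qA (B *m u); rewrite adjmxM !mulmxA.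
Qed.

End Psd.

Section FunctionalCalculus.
Variables (C : numClosedFieldType) (n : nat).
Implicit Types (A X : 'M[C]_n) (f g h : C -> C).

Local Notation P A := (spectralmx A).
Local Notation D A := (spectral_diag A).

Lemma herm_hermsym A : A = adj A -> A \is hermsymmx.
Proof. by move=> hA; apply/is_hermitianmxP; rewrite expr0 scale1r. Qed.

Lemma spectral_decomp A : A = adj A -> A = adj (P A) *m diag_mx (D A) *m P A.
Proof.
move=> /herm_hermsym/hermitian_normalmx/orthomx_spectralP.
by rewrite invmx_unitary ?spectral_unitarymx.
Qed.

Lemma mxfunE f A : mxfun f A = adj (P A) *m diag_mx (map_mx f (D A)) *m P A.
Proof. by rewrite /mxfun invmx_unitary ?spectral_unitarymx. Qed.

Lemma mxfun_id A : A = adj A -> mxfun id A = A.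
Proof. by move=> hA; rewrite mxfunE map_mx_id // -spectral_decomp. Qed.

Lemma mxfun_ext f g A : (forall i, f (D A 0 i) = g (D A 0 i)) ->
  mxfun f A = mxfun g A.
Proof.
move=> fg; rewrite !mxfunE; congr (_ *m diag_mx _ *m _).
by apply/matrixP=> i j; rewrite !mxE ord1 fg.
Qed.

Lemma mxfunM f g A : mxfun f A *m mxfun g A = mxfun (fun t => f t * g t) A.
Proof.
rewrite !mxfunE -!mulmxA; congr (_ *m _); rewrite !mulmxA.
rewrite -[_ *m P A *m adj (P A)]mulmxA mulmx_adj_unitary ?spectral_unitarymx //.
by rewrite mulmx1 mulmx_diag; congr (diag_mx _ *m _); apply/rowP=> j; rewrite !mxE.
Qed.

Lemma mxfun_mul f g h A : (forall t, f t * g t = h t) ->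
  mxfun f A *m mxfun g A = mxfun h A.
Proof. by move=> fgh; rewrite mxfunM; apply: mxfun_ext. Qed.

Lemma mxfun_cst c A : mxfun (fun=> c) A = c%:M.
Proof.
rewrite mxfunE (_ : map_mx _ _ = const_mx c); last by apply/matrixP=> i j; rewrite !mxE.
rewrite diag_const_mx mul_mx_scalar -scalemxAl.
by rewrite adj_mulmx_unitary ?spectral_unitarymx // scalemx1.
Qed.

Lemma mxfun_affine a b A : A = adj A -> mxfun (fun t => a + b * t) A = a%:M + b *: A.
Proof.
move=> hA; rewrite -{2}(mxfun_id hA) -(mxfun_cst a A) !mxfunE scalemxAl scalemxAr.
rewrite -mulmxDl -mulmxDr; congr (_ *m _ *m _).
by apply/matrixP=> i j; rewrite !mxE; case: eqP; rewrite ?mulr1n ?mulr0n ?mulr0 ?addr0.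
Qed.

Lemma adj_mxfun f A : adj (mxfun f A) = mxfun (fun t => (f t)^*) A.
Proof.
rewrite !mxfunE !adjmxM adjmxK adjmx_diag mulmxA; congr (_ *m diag_mx _ *m _).
by apply/matrixP=> i j; rewrite !mxE.
Qed.

Lemma diag_spectral A : A = adj A -> diag_mx (D A) = P A *m A *m adj (P A).
Proof.
move=> hA; have UU := mulmx_adj_unitary (spectral_unitarymx A).
by rewrite {3}(spectral_decomp hA) !mulmxA UU mul1mx -mulmxA UU mulmx1.
Qed.

Lemma spectral_mulmx A : A = adj A -> P A *m A = diag_mx (D A) *m P A.
Proof.
move=> hA; rewrite diag_spectral // -!mulmxA.
by rewrite adj_mulmx_unitary ?spectral_unitarymx ?mulmx1.
Qed.

Lemma mulmx_spectral_adj A : A = adj A -> A *m adj (P A) = adj (P A) *m diag_mx (D A).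
Proof.
move=> hA; rewrite {1}(spectral_decomp hA) -mulmxA.
by rewrite mulmx_adj_unitary ?spectral_unitarymx ?mulmx1.
Qed.

Lemma spectral_diag_real A : A = adj A -> forall i, D A 0 i \is Num.real.
Proof.
by move=> /herm_hermsym/hermitian_spectral_diag_real/mxOverP hA i; apply: hA.
Qed.

Lemma qform_col_adj (X Y : 'M[C]_n) i :
  qform Y (col i (adj X)) = (X *m Y *m adj X) i i.
Proof.
rewrite /qform; have -> : adj (col i (adj X)) = row i X.
  by apply/matrixP=> a b; rewrite !mxE conjCK.
by rewrite -row_mul !mxE; apply: eq_bigr => k _; rewrite !mxE.
Qed.

Lemma spectral_diag_ge0 A : psd A -> forall i, 0 <= D A 0 i.
Proof.
move=> Apsd i; have := psd_qform (col i (adj (P A))) Apsd.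
by rewrite qform_col_adj -(diag_spectral (psd_herm Apsd)) mxE eqxx mulr1n.
Qed.

Lemma psd_mxfun f A : A = adj A -> (forall i, 0 <= f (D A 0 i)) ->
  psd (mxfun f A).
Proof.
move=> hA f_ge0; split.
  by rewrite adj_mxfun; apply: mxfun_ext => i; rewrite geC0_conj.
move=> u; rewrite /qform mxfunE.
have -> : adj u *m (adj (P A) *m diag_mx (map_mx f (D A)) *m P A) *m u
    = adj (P A *m u) *m diag_mx (map_mx f (D A)) *m (P A *m u).
  by rewrite adjmxM !mulmxA.
rewrite mul_mx_diag !mxE; apply: sumr_ge0 => k _; rewrite !mxE.
by rewrite mulrAC mulr_ge0 // mulrC mul_conjC_ge0.
Qed.

Lemma eigenvalue_spectral_diag A k : A = adj A -> eigenvalue A (D A 0 k).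
Proof.
move=> hA; apply/eigenvalueP; exists (row k (P A)).
  by rewrite -row_mul spectral_mulmx // row_mul row_diag_mx -scalemxAl -rowE.
apply/negP => /eqP k0.
have /rowP/(_ k) := congr1 (row k) (mulmx_adj_unitary (spectral_unitarymx A)).
by rewrite row_mul k0 mul0mx !mxE eqxx => /eqP; rewrite eq_sym oner_eq0.
Qed.

Lemma eigenvalue_spectral_diagP A l : A = adj A -> eigenvalue A l ->
  exists k, l = D A 0 k.
Proof.
move=> hA /eigenvalueP [v vA v0].
set w := v *m adj (P A).
have wD : w *m diag_mx (D A) = l *: w.
  by rewrite /w -mulmxA scalemxAl -vA -mulmxA mulmx_spectral_adj.
have vw : v = w *m P A.
  by rewrite -mulmxA adj_mulmx_unitary ?spectral_unitarymx ?mulmx1.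
clearbody w; have [k wk] : exists k, w 0 k != 0.
  apply/existsP; apply: contraNT v0; rewrite negb_exists => /forallP w0.
  rewrite vw (_ : w = 0) ?mul0mx //.
  by apply/rowP=> j; rewrite mxE; apply/eqP/negPn/w0.
exists k; move/rowP: wD => /(_ k); rewrite mul_mx_diag !mxE => wkl.
by apply: (mulfI wk); rewrite mulrC wkl mulrC.
Qed.

End FunctionalCalculus.

Section SquareRoots.
Variables (C : numClosedFieldType) (n : nat).
Implicit Types (A S : 'M[C]_n) (t : C).

Definition prjmx A : 'M[C]_n := mxfun (fun t => (t != 0)%:R) A.

Definition isqrtC t : C := if t == 0 then 0 else (sqrtC t)^-1.

Lemma isqrtmxE A : isqrtmx A = mxfun isqrtC A.
Proof. by []. Qed.

Lemma sqrtC_isqrtC t : sqrtC t * isqrtC t = (t != 0)%:R.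
Proof.
by rewrite /isqrtC; case: eqP => [_|/eqP t0]; rewrite ?mulr0 ?divff ?sqrtC_eq0.
Qed.

Lemma isqrtC_sqrtC t : isqrtC t * sqrtC t = (t != 0)%:R.
Proof. by rewrite mulrC sqrtC_isqrtC. Qed.

Lemma isqrtC_conj t : isqrtC t * t * isqrtC t = (t != 0)%:R.
Proof.
by rewrite -{2}[t]sqrtCK expr2 !mulrA isqrtC_sqrtC -mulrA sqrtC_isqrtC -natrM mulnb andbb.
Qed.

Lemma sqrtmx_sq A : A = adj A -> sqrtmx A *m sqrtmx A = A.
Proof.
by move=> hA; rewrite -{3}(mxfun_id hA); apply: mxfun_mul => t; rewrite -expr2 sqrtCK.
Qed.

Lemma sqrtmx_isqrtmx A : sqrtmx A *m isqrtmx A = prjmx A.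
Proof. exact: mxfun_mul sqrtC_isqrtC. Qed.

Lemma isqrtmx_sqrtmx A : isqrtmx A *m sqrtmx A = prjmx A.
Proof. exact: mxfun_mul isqrtC_sqrtC. Qed.

Lemma isqrtmx_conj A : A = adj A -> isqrtmx A *m A *m isqrtmx A = prjmx A.
Proof.
move=> hA; rewrite -{2}(mxfun_id hA) isqrtmxE !mxfunM.
by apply: mxfun_ext => i; rewrite isqrtC_conj.
Qed.

Lemma prjmx_idem A : prjmx A *m prjmx A = prjmx A.
Proof. by apply: mxfun_mul => t; rewrite -natrM mulnb andbb. Qed.

Lemma sqrtmx_prjmx A : sqrtmx A *m prjmx A = sqrtmx A.
Proof.
by apply: mxfun_mul => t; case: (eqVneq t 0) => [->|]; rewrite ?sqrtC0 ?mul0r ?mulr1.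
Qed.

Lemma prjmx_isqrtmx A : prjmx A *m isqrtmx A = isqrtmx A.
Proof.
apply: mxfun_mul => t; rewrite -/(isqrtC t) /isqrtC.
by case: (eqVneq t 0); rewrite ?mulr0 ?mul1r.
Qed.

Lemma prjmx_mul A : A = adj A -> prjmx A *m A = A.
Proof.
move=> hA; rewrite -{2 3}(mxfun_id hA); apply: mxfun_mul => t.
by case: (eqVneq t 0) => [->|]; rewrite ?mulr0 ?mul1r.
Qed.

Lemma adj_prjmx A : adj (prjmx A) = prjmx A.
Proof. by rewrite adj_mxfun; apply: mxfun_ext => i; rewrite conjC_nat. Qed.

Lemma mul_prjmx A : A = adj A -> A *m prjmx A = A.
Proof. by move=> hA; rewrite -adj_prjmx {1 3}hA -adjmxM prjmx_mul -?hA. Qed.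

Lemma adj_sqrtmx A : psd A -> adj (sqrtmx A) = sqrtmx A.
Proof.
move=> Apsd; rewrite adj_mxfun; apply: mxfun_ext => i.
by rewrite geC0_conj // sqrtC_ge0 spectral_diag_ge0.
Qed.

Lemma adj_isqrtmx A : psd A -> adj (isqrtmx A) = isqrtmx A.
Proof.
move=> Apsd; rewrite isqrtmxE adj_mxfun; apply: mxfun_ext => i; rewrite /isqrtC.
by case: eqP; rewrite ?conjC0 // => _; rewrite geC0_conj // invr_ge0 sqrtC_ge0 spectral_diag_ge0.
Qed.

Lemma rank_prjmx A : A = adj A -> \rank (prjmx A) = \rank A.
Proof.
move=> hA; apply/eqP; rewrite eqn_leq; apply/andP; split.
  by rewrite -{1}(isqrtmx_conj hA) (leq_trans (mxrankM_maxl _ _)) ?mxrankM_maxr.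
by rewrite -{1}(prjmx_mul hA) mxrankM_maxl.
Qed.

Lemma psd_qform_eq0 S u : psd S -> qform S u = 0 -> S *m u = 0.
Proof.
move=> Spsd Su0; have SS := sqrtmx_sq (psd_herm Spsd).
suff Ru0 : sqrtmx S *m u = 0 by rewrite -SS -mulmxA Ru0 mulmx0.
apply: adj_mulmx_eq0; apply/matrixP=> i j; rewrite !ord1 adjmxM adj_sqrtmx //.
by rewrite mulmxA -[_ *m sqrtmx S *m sqrtmx S]mulmxA SS [RHS]mxE; exact: Su0.
Qed.

Lemma mul_prjmx_le S A : psd S -> loewner_le S A -> psd A -> S *m prjmx A = S.
Proof.
move=> Spsd SA Apsd; have hA := psd_herm Apsd.
set Q := 1%:M - prjmx A.
have AQ : A *m Q = 0 by rewrite mulmxBr mulmx1 mul_prjmx ?subrr.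
suff /eqP : S *m Q = 0 by rewrite mulmxBr mulmx1 subr_eq0 => /eqP/esym.
apply: mx_eq0_cV => u; rewrite -mulmxA; apply: psd_qform_eq0 => //.
have AQu : qform A (Q *m u) = 0.
  by rewrite /qform mulmxA -(mulmxA _ A) AQ mulmx0 mul0mx mxE.
have := psd_qform (Q *m u) SA; rewrite qformB AQu sub0r oppr_ge0 => Su_le0.
by apply/le_anti; rewrite Su_le0 psd_qform.
Qed.

Lemma prjmx_mul_le S A : psd S -> loewner_le S A -> psd A -> prjmx A *m S = S.
Proof.
move=> Spsd SA Apsd.
by rewrite -adj_prjmx (psd_herm Spsd) -adjmxM mul_prjmx_le -?psd_herm.
Qed.

End SquareRoots.

Lemma real_argmax (R : numDomainType) n (f : 'I_n.+1 -> R) :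
  (forall i, f i \is Num.real) -> exists k, forall i, f i <= f k.
Proof.
elim: n f => [|n IH] f fR; first by exists ord0 => i; rewrite ord1.
have [k kmax] := IH (f \o lift ord0) (fun i => fR _).
have [le_0k | le_k0] := orP (real_leVge (fR ord0) (fR (lift ord0 k))).
  by exists (lift ord0 k) => i; case: (unliftP ord0 i) => [j ->|->] //; apply: kmax.
exists ord0 => i; case: (unliftP ord0 i) => [j ->|->] //.
exact: le_trans (kmax j) le_k0.
Qed.

Lemma psdZ (C : numClosedFieldType) n c (A : 'M[C]_n) : 0 <= c -> psd A -> psd (c *: A).
Proof.
move=> c_ge0 [hA qA]; split=> [|u]; first by rewrite adjmxZ geC0_conj // -hA.
by rewrite /qform -scalemxAr -scalemxAl mxE mulr_ge0 // qA.
Qed.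

Lemma lambda_max_psd (C : numClosedFieldType) n (X : 'M[C]_n) : psd X -> X != 0 ->
  exists l, [/\ 0 < l, is_lambda_max X l & loewner_le X l%:M].
Proof.
case: n X => [X _|n X Xpsd X0]; first by rewrite [X]flatmx0 eqxx.
have hX := psd_herm Xpsd.
have [k kmax] := real_argmax (spectral_diag_real hX).
set l := spectral_diag X 0 k in kmax *.
have l_gt0 : 0 < l.
  rewrite lt_def spectral_diag_ge0 // andbT; apply: contra X0 => /eqP l0.
  rewrite -(mxfun_id hX) (@mxfun_ext _ _ _ (fun=> 0)) ?mxfun_cst ?raddf0 // => i.
  by apply/le_anti; rewrite spectral_diag_ge0 // -l0 kmax.
exists l; split=> //.
  split=> [|m]; first exact: eigenvalue_spectral_diag.
  by move/(eigenvalue_spectral_diagP hX) => [i ->].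
rewrite /loewner_le -scaleN1r -mxfun_affine //.
by apply: psd_mxfun => // i; rewrite mulN1r subr_ge0.
Qed.

Section Projections.
Variables (C : numClosedFieldType) (n : nat).
Implicit Types P Q R W : 'M[C]_n.

Definition orthoproj P := adj P = P /\ P *m P = P.

Lemma orthoproj_prjmx A : orthoproj (prjmx A).
Proof. by split; [apply: adj_prjmx | apply: prjmx_idem]. Qed.

Lemma orthoproj_compl P : orthoproj P -> orthoproj (1%:M - P).
Proof.
case=> aP iP; split; first by rewrite adjmxB adjmx1 aP.
by rewrite mulmxBl mul1mx mulmxBr mulmx1 iP subrr subr0.
Qed.

Lemma rank_compl P : P *m P = P -> \rank (1%:M - P) = (n - \rank P)%N.
Proof.
move=> iP; rewrite -mxrank_ker; apply/eqmx_rank; apply/andP; split.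
  by apply/sub_kermxP; rewrite mulmxBl mul1mx iP subrr.
have -> : kermx P = kermx P *m (1%:M - P) by rewrite mulmxBr mulmx1 mulmx_ker subr0.
exact: submxMl.
Qed.

Lemma orthoproj_eq P Q : orthoproj P -> orthoproj Q ->
  (Q <= P)%MS -> \rank Q = \rank P -> Q = P.
Proof.
move=> [aP iP] [aQ iQ] QP rkQP.
have /submxP [D PDQ] : (P <= Q)%MS by have [_ <-] := mxrank_leqif_sup QP; rewrite rkQP.
have /submxP [D' QDP] := QP.
have PQ : P *m Q = P by rewrite PDQ -mulmxA iQ.
have QP' : Q *m P = Q by rewrite QDP -mulmxA iP.
by have := congr1 (@adj C n n) PQ; rewrite adjmxM aP aQ QP'.
Qed.

End Projections.

Section PartialIsometries.
Variables (C : numClosedFieldType) (n : nat).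
Implicit Types P R V W : 'M[C]_n.

Lemma orthoproj_schmidt R r : orthoproj R -> \rank R = r ->
  exists G : 'M[C]_(r, n), G *m adj G = 1%:M /\ adj G *m G = R.
Proof.
move=> Rproj <-; set G := schmidt (row_base R).
have GG : G *m adj G = 1%:M by apply/unitarymxP/schmidt_unitarymx/rank_leq_col.
have rkG : \rank G = \rank R.
  by rewrite mxrank_unitary ?schmidt_unitarymx ?rank_leq_col.
have GR : (G <= R)%MS by rewrite /G eqmx_schmidt_free ?row_base_free ?eq_row_base.
exists G; split=> //; apply: orthoproj_eq => //.
- by split; rewrite ?adjmxM ?adjmxK // mulmxA -(mulmxA _ G) GG mulmx1.
- exact: submx_trans (submxMl _ _) GR.
apply/eqP; rewrite eqn_leq (leq_trans (mxrankM_maxr _ _)) ?rkG //=.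
by rewrite -{1}rkG -{1}[G]mul1mx -GG -mulmxA mxrankM_maxr.
Qed.

Lemma orthoproj_partial_isometry R1 R2 : orthoproj R1 -> orthoproj R2 ->
  \rank R1 = \rank R2 -> exists V, [/\ adj V *m V = R2, V *m adj V = R1 & V *m R2 = V].
Proof.
move=> R1proj R2proj rk12.
have [G2 [G2G2 <-]] := orthoproj_schmidt R2proj (erefl _).
have [G1 [G1G1 <-]] := orthoproj_schmidt R1proj rk12.
exists (adj G1 *m G2); rewrite adjmxM adjmxK; split.
- by rewrite mulmxA -(mulmxA _ G1) G1G1 mulmx1.
- by rewrite mulmxA -(mulmxA _ G2) G2G2 mulmx1.
- by rewrite mulmxA -(mulmxA _ G2) G2G2 mulmx1.
Qed.

Section PartialIsometry.
Variable W : 'M[C]_n.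
Hypothesis WW : W *m adj W *m W = W.

Lemma orthoproj_adj_mul_partial : orthoproj (adj W *m W).
Proof. by split; rewrite ?adjmxM ?adjmxK // -mulmxA (mulmxA W) WW. Qed.

Lemma orthoproj_mul_adj_partial : orthoproj (W *m adj W).
Proof. by split; rewrite ?adjmxM ?adjmxK // mulmxA WW. Qed.

Lemma rank_adj_mul_partial : \rank (adj W *m W) = \rank W.
Proof.
apply/eqP; rewrite eqn_leq mxrankM_maxr /=.
by rewrite -{1}WW -mulmxA mxrankM_maxr.
Qed.

Lemma rank_mul_adj_partial : \rank (W *m adj W) = \rank W.
Proof. by apply/eqP; rewrite eqn_leq mxrankM_maxl /= -{1}WW mxrankM_maxl. Qed.

Lemma partial_isometry_unitary : exists2 U, U \is unitarymx & U *m (adj W *m W) = W.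
Proof.
have [aP iP] := orthoproj_adj_mul_partial.
have [V [_ VV VR]] : exists V, [/\ adj V *m V = 1%:M - adj W *m W,
    V *m adj V = 1%:M - W *m adj W & V *m (1%:M - adj W *m W) = V].
  apply: orthoproj_partial_isometry.
  - exact/orthoproj_compl/orthoproj_mul_adj_partial.
  - exact/orthoproj_compl/orthoproj_adj_mul_partial.
  - by rewrite !rank_compl ?rank_adj_mul_partial ?rank_mul_adj_partial // mulmxA WW.
have WP : W *m (adj W *m W) = W by rewrite mulmxA WW.
have VP : V *m (adj W *m W) = 0 by rewrite -VR -mulmxA mulmxBl mul1mx iP subrr mulmx0.
have WV : W *m adj V = 0.
  by rewrite -{1}WP -mulmxA -{1}aP -adjmxM VP adjmx0 mulmx0.
exists (W + V); last by rewrite mulmxDl WP VP addr0.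
apply/unitarymxP; rewrite -/(adj (W + V)) adjmxD mulmxDl !mulmxDr WV VV.
by rewrite -[V *m adj W]adjmxK adjmxM adjmxK WV adjmx0 addr0 add0r addrC subrK.
Qed.

Lemma partial_isometry_adj_mul P : orthoproj P -> W *m P = W ->
  (\rank P <= \rank W)%N -> adj W *m W = P.
Proof.
move=> Pproj WP rkPW; apply: orthoproj_eq => //.
- exact: orthoproj_adj_mul_partial.
- by rewrite -WP mulmxA submxMl.
apply/eqP; rewrite rank_adj_mul_partial eqn_leq rkPW andbT.
by rewrite -{1}WP mxrankM_maxr.
Qed.

End PartialIsometry.

End PartialIsometries.

Section PartialTrace.
Variables (C : numClosedFieldType) (dA n : nat).

Local Notation idx := (@mxtens.mxtens_index _ _).
Local Notation "A *t B" := (mxtens.tensmx A B) (at level 40, left associativity).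

Lemma sum_tens_index p q (F : 'I_(p * q) -> C) :
  \sum_k F k = \sum_i \sum_j F (idx (i, j)).
Proof.
rewrite pair_big /= (reindex (@mxtens.mxtens_index p q)) /=.
  by apply: eq_bigr => -[i j].
by exists (@mxtens.mxtens_unindex p q) => k _;
  rewrite (mxtens.mxtens_indexK, mxtens.mxtens_unindexK).
Qed.

Lemma ptrA_sum I (r : seq I) (F : I -> 'M[C]_(dA * n)) :
  ptrA (\sum_(a <- r) F a) = \sum_(a <- r) ptrA (F a).
Proof.
apply/matrixP => j l; rewrite !mxE summxE.
under eq_bigr => i _ do rewrite summxE.
by rewrite exchange_big /=; apply: eq_bigr => a _; rewrite mxE.
Qed.

Lemma adj_ptrA (Y : 'M[C]_(dA * n)) : adj (ptrA Y) = ptrA (adj Y).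
Proof.
apply/matrixP => j l; rewrite !mxE rmorph_sum; apply: eq_bigr => i _.
by rewrite !mxE.
Qed.

Lemma mxtrace_ptrA (Y : 'M[C]_(dA * n)) : \tr (ptrA Y) = \tr Y.
Proof.
rewrite /mxtrace sum_tens_index exchange_big /=; apply: eq_bigr => j _.
by rewrite mxE.
Qed.

Lemma tens_suml I (r : seq I) (F : I -> 'M[C]_dA) (B : 'M[C]_n) :
  (\sum_(a <- r) F a) *t B = \sum_(a <- r) (F a *t B).
Proof.
apply/matrixP => p q; rewrite !mxE summxE summxE big_distrl /=.
by apply: eq_bigr => a _; rewrite !mxE.
Qed.

Lemma tens1mx1 : (1%:M : 'M[C]_dA) *t (1%:M : 'M[C]_n) = 1%:M.
Proof.
apply/matrixP => p q.
case: (mxtens.mxtens_indexP p) => i j; case: (mxtens.mxtens_indexP q) => i' j'.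
rewrite mxtens.tensmxE !mxE (can_eq (@mxtens.mxtens_indexK _ _)) xpair_eqE.
by case: (i == i'); case: (j == j'); rewrite ?mulr1n ?mulr0n ?mulr1 ?mulr0.
Qed.

Lemma adj_tens m1 m2 m3 m4 (A : 'M[C]_(m1, m2)) (B : 'M[C]_(m3, m4)) :
  adj (A *t B) = adj A *t adj B.
Proof. by rewrite /adj mxtens.trmx_tens mxtens.map_mxT. Qed.

Lemma tensmx1_mul (A B : 'M[C]_dA) :
  (A *m B) *t (1%:M : 'M[C]_n) = (A *t 1%:M) *m (B *t 1%:M).
Proof. by rewrite mxtens.tensmx_mul mulmx1. Qed.

Lemma ptrA_tens1C (X : 'M[C]_dA) (Y : 'M[C]_(dA * n)) :
  ptrA ((X *t 1%:M) *m Y) = ptrA (Y *m (X *t 1%:M)).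
Proof.
apply/matrixP => j l; rewrite !mxE.
under eq_bigr => i _ do rewrite mxE sum_tens_index.
under [RHS]eq_bigr => i _ do rewrite mxE sum_tens_index.
rewrite exchange_big /=; apply: eq_bigr => i _; apply: eq_bigr => i' _.
rewrite [LHS](bigD1 j) // [RHS](bigD1 l) //=.
rewrite [X in _ + X = _]big1 => [|j' /negbTE jj]; last first.
  by rewrite mxtens.tensmxE mxE eq_sym jj mulr0 mul0r.
rewrite [X in _ = _ + X]big1 => [|j' /negbTE jl]; last first.
  by rewrite mxtens.tensmxE mxE jl mulr0 mulr0.
by rewrite !mxtens.tensmxE !mxE !eqxx !mulr1 !addr0 mulrC.
Qed.

Lemma qformE m (X : 'M[C]_m) u :
  qform X u = \sum_q \sum_p (u p 0)^* * X p q * u q 0.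
Proof.
rewrite /qform mxE; apply: eq_bigr => q _; rewrite mxE big_distrl.
by apply: eq_bigr => p _; rewrite !mxE.
Qed.

Lemma tens_delta_cV (i : 'I_dA) (u : 'cV[C]_n) a j k :
  ((delta_mx i 0 : 'cV[C]_dA) *t u) (idx (a, j)) k = (a == i)%:R * u j 0.
Proof.
rewrite mxE mxtens.mxtens_indexK /= (ord1 (mxtens.mxtens_unindex k).1).
by rewrite (ord1 (mxtens.mxtens_unindex k).2) !mxE eqxx andbT.
Qed.

Lemma qform_tens_delta (Y : 'M[C]_(dA * n)) (u : 'cV[C]_n) i :
  qform Y ((delta_mx i 0 : 'cV[C]_dA) *t u) =
  \sum_l \sum_j (u j 0)^* * Y (idx (i, j)) (idx (i, l)) * u l 0.
Proof.
rewrite qformE sum_tens_index (bigD1 i) //= [X in _ + X]big1 => [|b /negbTE bi].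
  rewrite addr0; apply: eq_bigr => l _.
  rewrite sum_tens_index (bigD1 i) //= [X in _ + X]big1 => [|a /negbTE ai].
    by rewrite addr0; apply: eq_bigr => j _; rewrite !tens_delta_cV eqxx !mul1r.
  by apply: big1 => j _; rewrite tens_delta_cV ai mul0r conjC0 !mul0r.
by apply: big1 => l _; apply: big1 => p _; rewrite tens_delta_cV bi mul0r mulr0.
Qed.

Lemma qform_ptrA (Y : 'M[C]_(dA * n)) (u : 'cV[C]_n) :
  qform (ptrA Y) u = \sum_i qform Y ((delta_mx i 0 : 'cV[C]_dA) *t u).
Proof.
under [RHS]eq_bigr => i _ do rewrite qform_tens_delta.
rewrite qformE [RHS]exchange_big; apply: eq_bigr => l _.
rewrite [RHS]exchange_big; apply: eq_bigr => j _.
by rewrite mxE big_distrr big_distrl.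
Qed.

Lemma psd_ptrA (Y : 'M[C]_(dA * n)) : psd Y -> psd (ptrA Y).
Proof.
move=> Ypsd; split; first by rewrite adj_ptrA -(psd_herm Ypsd).
by move=> u; rewrite -/(qform _ u) qform_ptrA sumr_ge0 // => i _; apply: psd_qform.
Qed.

End PartialTrace.

Section Assemblages.
Variables (C : numClosedFieldType) (n nA nX : nat) (x0 : 'I_nX).
Implicit Types s t : 'I_nA -> 'I_nX -> 'M[C]_n.

(* The no-signalling properties of an assemblage: nothing else about its
   quantum realization is used. *)
Definition ns_assemblage s := [/\ forall a x, psd (s a x),
  forall x, \sum_a s a x = red x0 s & \tr (red x0 s) = 1].

Lemma assemblage_ns s : assemblage s -> ns_assemblage s.
Proof.
case=> dA [rho [M [[rho_psd rho_tr] Mpovm sE]]].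
have sum_s x : \sum_a s a x = ptrA rho.
  under eq_bigr => a _ do rewrite sE.
  by rewrite -ptrA_sum -mulmx_suml -tens_suml (proj2 (Mpovm x)) tens1mx1 mul1mx.
split=> [a x | x | ]; rewrite /red ?sum_s ?mxtrace_ptrA //.
have Ma_psd := proj1 (Mpovm x) a.
have aT : adj (mxtens.tensmx (sqrtmx (M x a)) (1%:M : 'M[C]_n)) =
    mxtens.tensmx (sqrtmx (M x a)) 1%:M by rewrite adj_tens adjmx1 adj_sqrtmx.
rewrite sE -(sqrtmx_sq (psd_herm Ma_psd)) tensmx1_mul -mulmxA ptrA_tens1C.
by apply/psd_ptrA; rewrite -{1}aT; apply: psd_conj.
Qed.

Section NsAssemblage.
Variable s : 'I_nA -> 'I_nX -> 'M[C]_n.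
Hypothesis s_ns : ns_assemblage s.

Local Notation rho := (red x0 s).

Lemma psd_assemblage a x : psd (s a x). Proof. by case: s_ns. Qed.

Lemma sum_assemblage x : \sum_a s a x = rho. Proof. by case: s_ns. Qed.

Lemma mxtrace_red : \tr rho = 1. Proof. by case: s_ns. Qed.

Lemma psd_red : psd rho.
Proof. by apply: psd_sum => a _; apply: psd_assemblage. Qed.

Lemma red_herm : rho = adj rho. Proof. exact/psd_herm/psd_red. Qed.

Lemma assemblage_le_red a x : loewner_le (s a x) rho.
Proof.
rewrite /loewner_le -(sum_assemblage x) (bigD1 a) //= addrAC subrr add0r.
by apply: psd_sum => b _; apply: psd_assemblage.
Qed.

Lemma assemblage_prjmx a x : s a x *m prjmx rho = s a x.
Proof. exact: mul_prjmx_le (psd_assemblage a x) (assemblage_le_red a x) psd_red. Qed.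

Lemma prjmx_assemblage a x : prjmx rho *m s a x = s a x.
Proof. exact: prjmx_mul_le (psd_assemblage a x) (assemblage_le_red a x) psd_red. Qed.

Lemma sqrtmx_seo a x : sqrtmx rho *m seo x0 s a x *m sqrtmx rho = s a x.
Proof.
(* [mxfun] unfolds to a product, so the square roots are generalized before
   reassociating with [mulmxA]. *)
rewrite /seo; move: (prjmx_assemblage a x) (assemblage_prjmx a x).
move: (sqrtmx_isqrtmx rho) (isqrtmx_sqrtmx rho).
move: (sqrtmx rho) (isqrtmx rho) (prjmx rho) => S I P SI IS Ps sP.
by rewrite !mulmxA SI Ps -mulmxA IS sP.
Qed.

Lemma prjmx_seo a x : prjmx rho *m seo x0 s a x *m prjmx rho = seo x0 s a x.
Proof.
rewrite /seo; move: (prjmx_isqrtmx rho) (adj_isqrtmx psd_red) (adj_prjmx rho).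
move: (isqrtmx rho) (prjmx rho) => I P PI aI aP.
have IP : I *m P = I by rewrite -aI -aP -adjmxM PI.
by rewrite !mulmxA PI -mulmxA IP.
Qed.

End NsAssemblage.

End Assemblages.

Lemma sqrtC_real_sq (C : numClosedFieldType) (q : C) : 0 < q ->
  (sqrtC q)^* = sqrtC q /\ sqrtC q * sqrtC q = q.
Proof. by move=> q_gt0; rewrite -expr2 sqrtCK geC0_conj // sqrtC_ge0 ltW. Qed.

Section Filters.
Variables (C : numClosedFieldType) (n nA nX : nat) (x0 : 'I_nX).
Implicit Types (s t : 'I_nA -> 'I_nX -> 'M[C]_n) (K L : 'M[C]_n).

Lemma conj_red s t L : (forall a x, L *m s a x *m adj L = t a x) ->
  L *m red x0 s *m adj L = red x0 t.
Proof.
move=> Lst; rewrite /red mulmx_sumr mulmx_suml.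
by apply: eq_bigr => a _; apply: Lst.
Qed.

Lemma lf1_filter_red s t K : lf1_filter x0 s t K ->
  red x0 t = (psucc x0 s K)^-1 *: (K *m red x0 s *m adj K).
Proof.
case=> _ _ tE; rewrite /red; under eq_bigr => a _ do rewrite tE.
by rewrite -scaler_sumr -mulmx_suml -mulmx_sumr.
Qed.

Lemma lf1_trans_rank_le s t : lf1_trans x0 s t ->
  (\rank (red x0 t) <= \rank (red x0 s))%N.
Proof.
case=> K /lf1_filter_red ->; apply: leq_trans (mxrank_scale _ _) _.
exact: leq_trans (mxrankM_maxl _ _) (mxrankM_maxr _ _).
Qed.

Lemma psucc_conj s t L : ns_assemblage x0 t ->
  (forall a x, L *m s a x *m adj L = t a x) -> psucc x0 s L = 1.
Proof.
by move=> t_ns Lst; rewrite /psucc mulmxA mxtrace_mulC mulmxA (conj_red Lst) mxtrace_red.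
Qed.

Lemma lf1_filter_scale s t L l : ns_assemblage x0 t ->
  (forall a x, L *m s a x *m adj L = t a x) -> 0 < l -> loewner_le (adj L *m L) l%:M ->
  lf1_filter x0 s t (sqrtC l^-1 *: L) /\ psucc x0 s (sqrtC l^-1 *: L) = l^-1.
Proof.
move=> t_ns Lst l_gt0 LLl.
have li_gt0 : 0 < l^-1 by rewrite invr_gt0.
have [cR cc] := sqrtC_real_sq li_gt0.
have KK : adj (sqrtC l^-1 *: L) *m (sqrtC l^-1 *: L) = l^-1 *: (adj L *m L).
  by rewrite adjmxZ cR -scalemxAl -scalemxAr scalerA cc.
have p_eq : psucc x0 s (sqrtC l^-1 *: L) = l^-1.
  by rewrite /psucc KK -scalemxAr mxtraceZ -/(psucc _ _ _) (psucc_conj t_ns) ?mulr1.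
split=> //; split; rewrite ?p_eq //.
  rewrite /loewner_le KK -[1%:M](scalerK (lt0r_neq0 l_gt0)) scale_scalar_mx mulr1.
  by rewrite -scalerBr; apply: psdZ; rewrite ?invr_ge0 ?ltW.
move=> a x; rewrite invrK adjmxZ cR -!scalemxAl -scalemxAr !scalerA -mulrA cc.
by rewrite mulfV ?gt_eqF // scale1r Lst.
Qed.

End Filters.

Section Optimality.
Variables (C : numClosedFieldType) (n nA nX : nat) (x0 : 'I_nX).
Implicit Types (s t : 'I_nA -> 'I_nX -> 'M[C]_n) (K L : 'M[C]_n).

Lemma tomographic_span s : tomographic s -> exists f : 'I_(n ^ 2) -> 'I_nA * 'I_nX,
  forall Y : 'M[C]_n, exists w : 'I_(n ^ 2) -> C, Y = \sum_k w k *: s (f k).1 (f k).2.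
Proof.
case=> f f_free; exists f => Y.
set M := \matrix_(k < n ^ 2) mxvec (s (f k).1 (f k).2).
have M_full : row_full M by move: f_free; rewrite /row_free /row_full => /eqP ->; rewrite mulnn.
have /submxP [D YD] := submx_full (mxvec Y) M_full.
exists (fun k => D 0 k); rewrite -(mxvecK Y) YD mulmx_sum_row linear_sum.
by apply: eq_bigr => k _; rewrite linearZ /= rowK mxvecK.
Qed.

Lemma conj_tomographic s K L c : tomographic s ->
  (forall a x, K *m s a x *m adj K = c *: (L *m s a x *m adj L)) ->
  forall Y, K *m Y *m adj K = c *: (L *m Y *m adj L).
Proof.
move=> /tomographic_span [f span] KL Y; have [w ->] := span Y.
rewrite !(mulmx_sumr, mulmx_suml) scaler_sumr; apply: eq_bigr => k _.
by rewrite -!scalemxAr -!scalemxAl KL !scalerA mulrC.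
Qed.

Lemma mxtrace_conj_rank1 m (A : 'M[C]_(m, n)) (u : 'cV[C]_n) :
  \tr (A *m (u *m adj u) *m adj A) = qform (adj A *m A) u.
Proof.
rewrite /qform mulmxA -(mulmxA (A *m u)) -adjmxM mxtrace_mulC.
by rewrite trace_mx11 adjmxM !mulmxA.
Qed.

Lemma mulmx_adj_row_gt0 (v : 'rV[C]_n) : v != 0 -> 0 < (v *m adj v) 0 0.
Proof.
move=> v0; rewrite lt_def; apply/andP; split.
  apply: contra v0 => /eqP vv0; apply/eqP; rewrite -[v]adjmxK.
  rewrite (@adj_mulmx_eq0 _ _ _ (adj v)) ?adjmx0 // adjmxK.
  by apply/matrixP=> i j; rewrite !ord1 vv0 mxE.
by rewrite mxE sumr_ge0 // => j _; rewrite !mxE mul_conjC_ge0.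
Qed.

Lemma psucc_le_lambda_max s t L K l : tomographic s ->
  (forall a x, L *m s a x *m adj L = t a x) -> is_lambda_max (adj L *m L) l ->
  0 < l -> lf1_filter x0 s t K -> psucc x0 s K <= l^-1.
Proof.
move=> s_tom Lst [/eigenvalueP [v vLL v0] _] l_gt0 [KK1 p_gt0 tE].
set p := psucc x0 s K in p_gt0 tE *.
have KL a x : K *m s a x *m adj K = p *: (L *m s a x *m adj L).
  by rewrite Lst tE scalerA mulfV ?gt_eqF ?scale1r.
have := congr1 mxtrace (conj_tomographic s_tom KL (adj v *m adj (adj v))).
rewrite mxtraceZ !mxtrace_conj_rank1 => qK.
have qL : qform (adj L *m L) (adj v) = l * (v *m adj v) 0 0.
  by rewrite /qform adjmxK vLL -scalemxAl mxE.
have := psd_qform (adj v) KK1; rewrite qformB qK qL.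
rewrite /qform adjmxK mulmx1 subr_ge0 mulrA -{2}[(v *m adj v) 0 0]mul1r.
by rewrite ler_pM2r ?mulmx_adj_row_gt0 // -ler_pdivlMr // mul1r.
Qed.

End Optimality.

Lemma seo_equiv_sym (C : numClosedFieldType) n nA nX (x0 : 'I_nX)
    (s1 s2 : 'I_nA -> 'I_nX -> 'M[C]_n) :
  seo_equiv x0 s1 s2 -> seo_equiv x0 s2 s1.
Proof.
case=> U [U_unitary seoU]; exists (adj U); split; first by rewrite /adj trmxC_unitary.
move=> a x; rewrite seoU adjmxK; move: (seo x0 s2 a x) => Y.
by rewrite !mulmxA adj_mulmx_unitary // mul1mx -mulmxA adj_mulmx_unitary // mulmx1.
Qed.

Section SeoEquivalence.
Variables (C : numClosedFieldType) (n nA nX : nat) (x0 : 'I_nX).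
Variables s1 s2 : 'I_nA -> 'I_nX -> 'M[C]_n.
Hypotheses (s1_ns : ns_assemblage x0 s1) (s2_ns : ns_assemblage x0 s2).

Local Notation rho1 := (red x0 s1).
Local Notation rho2 := (red x0 s2).

Lemma seo_conj_assemblage U :
  (forall a x, seo x0 s1 a x = U *m seo x0 s2 a x *m adj U) ->
  forall a x, sqrtmx rho1 *m U *m isqrtmx rho2 *m s2 a x *m
              adj (sqrtmx rho1 *m U *m isqrtmx rho2) = s1 a x.
Proof.
move=> seoU a x; rewrite -(sqrtmx_seo s1_ns) seoU /seo.
move: (adj_sqrtmx (psd_red s1_ns)) (adj_isqrtmx (psd_red s2_ns)).
by move: (sqrtmx rho1) (isqrtmx rho2) => S I aS aI; rewrite !adjmxM aS aI !mulmxA.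
Qed.

Lemma seo_filter_adj_mul U :
  adj (sqrtmx rho1 *m U *m isqrtmx rho2) *m (sqrtmx rho1 *m U *m isqrtmx rho2) =
  isqrtmx rho2 *m adj U *m rho1 *m U *m isqrtmx rho2.
Proof.
move: (adj_sqrtmx (psd_red s1_ns)) (adj_isqrtmx (psd_red s2_ns)).
move: (sqrtmx_sq (red_herm s1_ns)) => SS.
move: (sqrtmx rho1) (isqrtmx rho2) SS => S I SS aS aI.
by rewrite !adjmxM aS aI !mulmxA -(mulmxA _ S S) SS.
Qed.

Lemma seo_equiv_filter U :
  (forall a x, seo x0 s1 a x = U *m seo x0 s2 a x *m adj U) ->
  exists l : C,
    [/\ is_lambda_max (isqrtmx rho2 *m adj U *m rho1 *m U *m isqrtmx rho2) l,
        lf1_filter x0 s2 s1 (sqrtC l^-1 *: (sqrtmx rho1 *m U *m isqrtmx rho2)),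
        psucc x0 s2 (sqrtC l^-1 *: (sqrtmx rho1 *m U *m isqrtmx rho2)) = l^-1 &
        tomographic s2 ->
          forall K : 'M[C]_n, lf1_filter x0 s2 s1 K -> psucc x0 s2 K <= l^-1].
Proof.
move=> seoU; have Lst := seo_conj_assemblage seoU.
rewrite -seo_filter_adj_mul.
move: (sqrtmx rho1 *m U *m isqrtmx rho2) Lst => L Lst.
have LL0 : adj L *m L != 0.
  apply: contra_neq (oner_neq0 C) => LL0.
  by rewrite -(psucc_conj s1_ns Lst) /psucc LL0 mulmx0 mxtrace0.
have [l [l_gt0 lmax LLle]] := lambda_max_psd (psd_adj_mulmx L) LL0.
have [Kf Kp] := lf1_filter_scale s1_ns Lst l_gt0 LLle.
by exists l; split=> // s2_tom K; apply: psucc_le_lambda_max s2_tom Lst lmax l_gt0.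
Qed.

Lemma seo_equiv_lf1_trans : seo_equiv x0 s1 s2 -> lf1_trans x0 s2 s1.
Proof.
by case=> U [_ /seo_equiv_filter [l [_ K_filter _ _]]]; eexists; exact: K_filter.
Qed.

Section FilterIsometry.
Variable K : 'M[C]_n.
Hypothesis K_filter : lf1_filter x0 s2 s1 K.

Local Notation p := (psucc x0 s2 K).

Definition filter_isometry := sqrtC p^-1 *: (isqrtmx rho1 *m K *m sqrtmx rho2).

Let p_gt0 : 0 < p. Proof. by case: K_filter. Qed.

Let sqrt_pinv : (sqrtC p^-1)^* = sqrtC p^-1 /\ sqrtC p^-1 * sqrtC p^-1 = p^-1.
Proof. by apply: sqrtC_real_sq; rewrite invr_gt0. Qed.

Lemma filter_isometry_mul_adj : filter_isometry *m adj filter_isometry = prjmx rho1.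
Proof.
have [cR cc] := sqrt_pinv; have rho1E := lf1_filter_red K_filter.
rewrite /filter_isometry adjmxZ cR -scalemxAl -scalemxAr scalerA cc.
rewrite -(isqrtmx_conj (red_herm s1_ns)).
move: (adj_sqrtmx (psd_red s2_ns)) (adj_isqrtmx (psd_red s1_ns)).
move: (sqrtmx_sq (red_herm s2_ns)) => SS.
move: (sqrtmx rho2) (isqrtmx rho1) SS => S I SS aS aI.
by rewrite rho1E !adjmxM aS aI -scalemxAr -scalemxAl !mulmxA -(mulmxA _ S S) SS.
Qed.

Lemma filter_isometry_prjmx : filter_isometry *m prjmx rho2 = filter_isometry.
Proof.
rewrite /filter_isometry -scalemxAl; congr (_ *: _).
by move: (sqrtmx_prjmx rho2) => SP; rewrite -mulmxA SP.
Qed.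

Lemma prjmx_filter_isometry : prjmx rho1 *m filter_isometry = filter_isometry.
Proof.
rewrite /filter_isometry -scalemxAr; congr (_ *: _).
move: (prjmx_isqrtmx rho1); move: (prjmx rho1) (isqrtmx rho1) => P I PI.
by rewrite !mulmxA PI.
Qed.

Lemma filter_isometry_seo a x :
  filter_isometry *m seo x0 s2 a x *m adj filter_isometry = seo x0 s1 a x.
Proof.
have [cR cc] := sqrt_pinv; case: K_filter => _ _ s1E.
rewrite /filter_isometry /seo adjmxZ cR -!scalemxAl -scalemxAr scalerA cc s1E.
move: (adj_sqrtmx (psd_red s2_ns)) (adj_isqrtmx (psd_red s1_ns)).
move: (sqrtmx_isqrtmx rho2) (isqrtmx_sqrtmx rho2).
move: (prjmx_assemblage s2_ns a x) (assemblage_prjmx s2_ns a x).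
move: (sqrtmx rho2) (isqrtmx rho2) (isqrtmx rho1) (prjmx rho2) => S I2 I1 P Ps sP SI IS aS aI.
rewrite !adjmxM aS aI -scalemxAr -scalemxAl !mulmxA -(mulmxA _ S I2) SI.
by rewrite -(mulmxA _ P) Ps -(mulmxA _ I2 S) IS -(mulmxA _ _ P) sP.
Qed.

End FilterIsometry.

Lemma lf1_trans_seo_equiv : lf1_trans x0 s2 s1 -> \rank rho1 = \rank rho2 ->
  seo_equiv x0 s1 s2.
Proof.
case=> K K_filter rk12.
have WW : filter_isometry K *m adj (filter_isometry K) *m filter_isometry K =
    filter_isometry K.
  by rewrite filter_isometry_mul_adj ?prjmx_filter_isometry.
have WWP2 : adj (filter_isometry K) *m filter_isometry K = prjmx rho2.
  apply: (partial_isometry_adj_mul WW (orthoproj_prjmx rho2)).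
    exact: filter_isometry_prjmx.
  rewrite -(rank_mul_adj_partial WW) filter_isometry_mul_adj //.
  by rewrite (rank_prjmx (red_herm s1_ns)) (rank_prjmx (red_herm s2_ns)) rk12.
have [U U_unitary UW] := partial_isometry_unitary WW.
exists U; split=> // a x.
rewrite -(filter_isometry_seo K_filter) -[in RHS](prjmx_seo s2_ns) -WWP2.
move: (filter_isometry K) (seo x0 s2 a x) UW => W Y UW.
have aW : adj W = adj W *m W *m adj U by rewrite -{1}UW !adjmxM adjmxK.
by move: (adj W *m W) UW aW => Q <- ->; rewrite !mulmxA.
Qed.

End SeoEquivalence.

Theorem theorem1 (C : numClosedFieldType) (n nA nX : nat) (x0 : 'I_nX)
  (s1 s2 : 'I_nA -> 'I_nX -> 'M[C]_n) :
  assemblage s1 -> assemblage s2 ->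
  [/\ (seo_equiv x0 s1 s2 <-> lf1_equiv x0 s1 s2),
      (lf1_equiv x0 s1 s2 <->
         (lf1_trans x0 s2 s1 /\ \rank (red x0 s1) = \rank (red x0 s2))) &
      forall U : 'M[C]_n, U \is unitarymx ->
        (forall a x, seo x0 s1 a x = U *m seo x0 s2 a x *m adj U) ->
        exists l : C,
          [/\ is_lambda_max
                (isqrtmx (red x0 s2) *m adj U *m red x0 s1 *m U *m isqrtmx (red x0 s2)) l,
              lf1_filter x0 s2 s1
                (sqrtC l^-1 *: (sqrtmx (red x0 s1) *m U *m isqrtmx (red x0 s2))),
              psucc x0 s2
                (sqrtC l^-1 *: (sqrtmx (red x0 s1) *m U *m isqrtmx (red x0 s2))) = l^-1 &
              tomographic s2 ->
                forall K : 'M[C]_n, lf1_filter x0 s2 s1 K -> psucc x0 s2 K <= l^-1]].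
Proof.
move=> /(assemblage_ns x0) s1_ns /(assemblage_ns x0) s2_ns.
have seo_lf1 : seo_equiv x0 s1 s2 -> lf1_equiv x0 s1 s2.
  by move=> E; split; [apply: (seo_equiv_lf1_trans s2_ns s1_ns) (seo_equiv_sym E)
                     | apply: (seo_equiv_lf1_trans s1_ns s2_ns) E].
have lf1_rank : lf1_equiv x0 s1 s2 -> \rank (red x0 s1) = \rank (red x0 s2).
  by case=> T12 T21; apply/eqP; rewrite eqn_leq !lf1_trans_rank_le.
split.
- split=> [|E]; first exact: seo_lf1.
  exact: lf1_trans_seo_equiv s1_ns s2_ns E.2 (lf1_rank E).
- split=> [E | [T21 rk]]; first by split; [exact: E.2 | exact: lf1_rank].
  exact/seo_lf1/(lf1_trans_seo_equiv s1_ns s2_ns T21 rk).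
- by move=> U _; apply: seo_equiv_filter.
Qed.
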